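(* Let $(A,\times)$ be a (left) Leibniz dual algebra over a field, i.e. $(a\times b)\times c=a\times(b\times c+c\times b)$ for all $a,b,c\in A$. Then $A$ satisfies the (right) Tortken identity $$(a\times b)\times(c\times d)-(a\times d)\times(c\times b)=(a,b,c)\times d-(a,d,c)\times b\quad\text{for all }a,b,c,d\in A.$$
   Context: The associator is $(a,b,c)=a\times(b\times c)-(a\times b)\times c$. *)

From mathcomp Require Import all_boot all_algebra.
Set Implicit Arguments. Unset Strict Implicit. Unset Printing Implicit Defensive.
Import GRing.Theory.
Local Open Scope ring_scope.

Definition bilinear_prod (K : fieldType) (V : lmodType K) (mul : V -> V -> V) :=
  (forall k a b c, mul (k *: a + b) c = k *: mul a c + mul b c) /\
  (forall k a b c, mul a (k *: b + c) = k *: mul a b + mul a c).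

Definition assoc (K : fieldType) (V : lmodType K) (mul : V -> V -> V) (a b c : V) :=
  mul a (mul b c) - mul (mul a b) c.

Definition left_leibniz_dual (K : fieldType) (V : lmodType K) (mul : V -> V -> V) :=
  forall a b c, mul (mul a b) c = mul a (mul b c + mul c b).

From mathcomp Require Import all_boot all_algebra.
Local Open Scope ring_scope.
Import GRing.Theory.

(* Every product (x y) z unfolds to x (y z) + x (z y), and the associator collapses
   to (a, b, c) = - a (c b).  Unfolding once more, (a b)(c d) - a (b (c d)) equals
   a ((c d) b), which is symmetric in b and d, so both sides of the identity reduce
   to a (b (c d)) - a (d (c b)). *)

Section LeibnizDual.

Context {K : fieldType} {V : lmodType K} {mul : V -> V -> V}.
Hypothesis mul_bilinear : bilinear_prod mul.
Hypothesis mul_leibniz : left_leibniz_dual mul.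

Lemma mulDl x y z : mul (x + y) z = mul x z + mul y z.
Proof. by have := mul_bilinear.1 1 x y z; rewrite !scale1r. Qed.

Lemma mulDr x y z : mul z (x + y) = mul z x + mul z y.
Proof. by have := mul_bilinear.2 1 z x y; rewrite !scale1r. Qed.

Lemma mul0l z : mul 0 z = 0.
Proof. by apply: (addrI (mul 0 z)); rewrite -mulDl !addr0. Qed.

Lemma mulNl x z : mul (- x) z = - mul x z.
Proof. by apply: (addrI (mul x z)); rewrite -mulDl !subrr mul0l. Qed.

Lemma mul_leibnizD a b c : mul (mul a b) c = mul a (mul b c) + mul a (mul c b).
Proof. by rewrite mul_leibniz mulDr. Qed.

Lemma assoc_leibniz a b c : assoc mul a b c = - mul a (mul c b).
Proof. by rewrite /assoc mul_leibnizD opprD addrA subrr add0r. Qed.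

End LeibnizDual.

Theorem mainTheorem16 (K : fieldType) (V : lmodType K) (mul : V -> V -> V) :
  bilinear_prod mul -> left_leibniz_dual mul ->
  forall a b c d : V,
    mul (mul a b) (mul c d) - mul (mul a d) (mul c b)
    = mul (assoc mul a b c) d - mul (assoc mul a d c) b.
Proof.
move=> bil leib a b c d.
rewrite !(assoc_leibniz bil leib) !(mulNl bil) !(mul_leibnizD bil leib).
rewrite [mul c (mul b d) + _]addrC.
set s := mul a (_ + _); set x := mul a (mul b _); set y := mul a (mul d _).
by rewrite opprK [RHS]addrC (addrC x) (addrC y).
Qed.
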